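(* Let $R$ be a field having an element of infinite multiplicative order, and let $L\subseteq R[x]$ be the set of polynomials of degree $1$. Then every $\ell\in L$ is $2$-connected with $x$ through $L$, and consequently any two elements of $L$ are $4$-connected through $L$.
   Context: For a ring $S$ and $\ell,\ell'\in S$, $\ell\sim\ell'$ (1-connected) means: for all positive integers $m,n$ with $(\ell-\ell')\mid(\ell^m-(\ell')^n)$ we have $m=n$ (this relation is symmetric). $\ell$ and $\ell'$ are $k$-connected through a subset $T\subseteq S$ if there are $l_0,\dots,l_k\in S$ with $l_0=\ell$, $l_k=\ell'$, $l_1,\dots,l_{k-1}\in T$, and $l_{i-1}\sim l_i$ for $i=1,\dots,k$. *)

From mathcomp Require Import all_boot all_order all_algebra.
Set Implicit Arguments. Unset Strict Implicit. Unset Printing Implicit Defensive.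
Import GRing.Theory.
Local Open Scope ring_scope.

Definition rdvd (S : comNzRingType) (a b : S) : Prop := exists c : S, b = a * c.

Definition one_conn (S : comNzRingType) (l l' : S) : Prop :=
  forall m n : nat, (0 < m)%N -> (0 < n)%N ->
    rdvd (l - l') (l ^+ m - l' ^+ n) -> m = n.

Definition kconn (S : comNzRingType) (T : S -> Prop) (k : nat) (l l' : S) : Prop :=
  exists f : nat -> S,
    [/\ f 0%N = l, f k = l',
        (forall i : nat, (0 < i < k)%N -> T (f i)) &
        (forall i : nat, (0 < i <= k)%N -> one_conn (f i.-1) (f i))].

Definition deg1 (R : fieldType) (p : {poly R}) : Prop := size p = 2%N.

From mathcomp Require Import all_boot all_order all_algebra.
From mathcomp Require Import zify.
Local Open Scope ring_scope.
Import GRing.Theory.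

(* A ring morphism phi that identifies l and l' turns a relation
   (l - l') | (l^m - l'^n) into phi(l)^m = phi(l)^n, so if phi(l) has infinite
   multiplicative order then m = n and l ~ l'.  For polynomials we take phi to
   be evaluation at a point of R.  Fix a of infinite order and a linear l: l
   takes the value v = a^2 at some point s; choose u in {a, a^3} with u <> s
   and let m be the line through (s, v) and (u, u).  Then l(s) = m(s) = v and
   m(u) = X(u) = u are both of infinite order, so l ~ m ~ X: the path l, m, X
   shows that l is 2-connected with X through L.  Finally 1-connectedness is
   symmetric, so k-connectedness is symmetric, and paths through L can be
   concatenated at a point of L; as X is in L, two 2-paths l ~> X and X ~> l'
   give a 4-path from l to l'. *)

Lemma one_conn_sym {S : comNzRingType} (l l' : S) :
  one_conn l l' -> one_conn l' l.
Proof.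
move=> conn m n m_gt0 n_gt0 [c dvd_mn]; apply/esym/conn => //.
by exists c; rewrite -opprB dvd_mn -mulNr opprB.
Qed.

Lemma one_conn_rmorph (S T : comNzRingType) (phi : {rmorphism S -> T})
  (l l' : S) :
  phi l = phi l' -> injective (fun n : nat => phi l ^+ n) -> one_conn l l'.
Proof.
move=> phi_eq pow_inj m n _ _ [c dvd_mn]; apply: pow_inj => /=.
move/(congr1 phi)/eqP: dvd_mn.
by rewrite rmorphM !rmorphB !rmorphXn -phi_eq subrr mul0r subr_eq0 => /eqP.
Qed.

Lemma expf_inj {R : fieldType} {a : R} :
  a != 0 -> (forall n : nat, (0 < n)%N -> a ^+ n != 1) ->
  injective (fun n : nat => a ^+ n).
Proof.
move=> a_neq0 a_ninf.
suff lt_neq i j : (i < j)%N -> a ^+ i != a ^+ j.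
  by move=> i j /= eq_ij; case: (ltngtP i j) => // /lt_neq; rewrite eq_ij ?eqxx.
move=> lt_ij; rewrite -(subnKC (ltnW lt_ij)) exprD -{1}[a ^+ i]mulr1.
by rewrite (inj_eq (mulfI _)) ?expf_neq0 // eq_sym a_ninf ?subn_gt0.
Qed.

Lemma expX_inj (R : comNzRingType) (a : R) (k : nat) :
  injective (fun n : nat => a ^+ n) -> (0 < k)%N ->
  injective (fun n : nat => (a ^+ k) ^+ n).
Proof.
move=> a_inj k_gt0 i j /=; rewrite -!exprM => /a_inj/eqP.
by rewrite eqn_pmul2l // => /eqP.
Qed.

Lemma one_conn_horner {R : fieldType} {p q : {poly R}} {r : R} :
  p.[r] = q.[r] -> injective (fun n : nat => p.[r] ^+ n) -> one_conn p q.
Proof. exact: (@one_conn_rmorph _ _ (horner_eval r)). Qed.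

Lemma deg1_onto {R : fieldType} {p : {poly R}} (v : R) :
  deg1 p -> exists s : R, p.[s] = v.
Proof.
rewrite /deg1 => size_p.
have p1_neq0 : p`_1 != 0.
  by rewrite -[1%N]/(2.-1)%N -size_p -lead_coefE lead_coef_eq0 -size_poly_eq0 size_p.
exists ((v - p`_0) / p`_1).
rewrite horner_coef size_p !big_ord_recl big_ord0 /= expr0 expr1 mulr1 addr0.
by rewrite mulrC divfK // addrC subrK.
Qed.

Lemma deg1_interpolate {R : fieldType} {s u v w : R} :
  s != u -> v != w ->
  exists m : {poly R}, [/\ deg1 m, m.[s] = v & m.[u] = w].
Proof.
move=> s_neq_u v_neq_w; set k := (v - w) / (s - u).
have k_neq0 : k != 0 by rewrite mulf_neq0 ?invr_eq0 ?subr_eq0.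
exists (k *: ('X - u%:P) + w%:P); split.
- by rewrite /deg1 size_polyDl ?size_scale // size_XsubC // size_polyC; case: (w != 0).
- by rewrite !hornerE /k divfK ?subr_eq0 // subrK.
- by rewrite !hornerE subrr mulr0 add0r.
Qed.

Lemma deg1_one_conn_mid {R : fieldType} {a : R} {l : {poly R}} :
  injective (fun n : nat => a ^+ n) -> deg1 l ->
  exists m : {poly R}, [/\ deg1 m, one_conn l m & one_conn m 'X].
Proof.
move=> a_inj deg1_l.
have pow_neq i j : i <> j -> a ^+ i != a ^+ j by move=> neq_ij; apply/eqP => /a_inj.
have [s ls] := deg1_onto (a ^+ 2) deg1_l.
pose i := if s == a then 3%N else 1%N.
have i_gt0 : (0 < i)%N by rewrite /i; case: ifP.
have i_neq2 : i <> 2%N by rewrite /i; case: ifP.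
have s_neq_u : s != a ^+ i.
  rewrite /i; case: (s =P a) => [-> | /eqP]; last by rewrite expr1.
  by rewrite -{1}(expr1 a) pow_neq.
have v_neq_u : a ^+ 2 != a ^+ i by rewrite pow_neq // => /esym.
have [m [deg1_m ms mu]] := deg1_interpolate s_neq_u v_neq_u.
have eq_at_s : l.[s] = m.[s] by rewrite ls ms.
have eq_at_u : m.[a ^+ i] = 'X.[a ^+ i] by rewrite hornerX mu.
exists m; split => //.
- by apply: (one_conn_horner eq_at_s); rewrite ls; apply: expX_inj.
- by apply: (one_conn_horner eq_at_u); rewrite mu; apply: expX_inj.
Qed.

Lemma kconn_sym {S : comNzRingType} {T : S -> Prop} {k : nat} {l l' : S} :
  kconn T k l l' -> kconn T k l' l.
Proof.
case=> f [f0 fk f_in f_conn]; exists (fun i => f (k - i)%N); split.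
- by rewrite subn0.
- by rewrite subnn.
- by move=> i /andP [i_gt0 i_lt]; apply: f_in; apply/andP; split; lia.
- move=> i /andP [i_gt0 i_le]; apply: one_conn_sym.
  have -> : (k - i = (k - i.-1).-1)%N by lia.
  by apply: f_conn; apply/andP; split; lia.
Qed.

Lemma kconn_two {S : comNzRingType} (T : S -> Prop) {l m l' : S} :
  T m -> one_conn l m -> one_conn m l' -> kconn T 2 l l'.
Proof.
move=> T_m l_m m_l'.
by exists (fun i => match i with 0 => l | 1 => m | _ => l' end)%N; split;
  [| | case=> [|[|[]]] | case=> [|[|[|]]]].
Qed.

Lemma kconn_trans {S : comNzRingType} (T : S -> Prop) {j k : nat} {l l' l'' : S} :
  T l' -> kconn T j l l' -> kconn T k l' l'' -> kconn T (j + k) l l''.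
Proof.
move=> T_l' [f [f0 fj f_in f_conn]] [g [g0 gk g_in g_conn]].
exists (fun i => if (i <= j)%N then f i else g (i - j)%N); split.
- by rewrite leq0n.
- case: leqP => [le_jk | _]; last by rewrite addKn.
  have k0 : k = 0%N by lia.
  by rewrite k0 addn0 fj -g0 -k0.
- move=> i /andP [i_gt0 i_lt] /=; case: (ltngtP i j) => [lt_ij | lt_ji | ->].
  + by apply: f_in; rewrite i_gt0.
  + by apply: g_in; apply/andP; split; lia.
  + by rewrite fj.
- move=> i /andP [i_gt0 i_le] /=; case: (leqP i j) => [le_ij | lt_ji].
    by rewrite (leq_trans (leq_pred i) le_ij); apply: f_conn; rewrite i_gt0.
  case: (leqP i.-1 j) => [le_pred | lt_pred].
    have -> : i.-1 = j by lia.
    have -> : (i - j = 1)%N by lia.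
    by rewrite fj -g0; apply: (g_conn 1%N); apply/andP; split; lia.
  have -> : (i.-1 - j = (i - j).-1)%N by lia.
  by apply: g_conn; apply/andP; split; lia.
Qed.

Theorem theorem2p9 (R : fieldType)
  (Hinf : exists a : R, a != 0 /\ forall n : nat, (0 < n)%N -> a ^+ n != 1) :
  (forall l : {poly R}, deg1 l -> kconn (@deg1 R) 2 l 'X) /\
  (forall l l' : {poly R}, deg1 l -> deg1 l' -> kconn (@deg1 R) 4 l l').
Proof.
have [a [a_neq0 a_ninf]] := Hinf.
have a_inj := expf_inj a_neq0 a_ninf.
have deg1_X : deg1 ('X : {poly R}) by rewrite /deg1 size_polyX.
have conn2_X l : deg1 l -> kconn (@deg1 R) 2 l 'X.
  move=> deg1_l; have [m [deg1_m l_m m_X]] := deg1_one_conn_mid a_inj deg1_l.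
  exact: kconn_two deg1_m l_m m_X.
split=> // l l' deg1_l deg1_l'.
have X_conn2_l' := kconn_sym (conn2_X l' deg1_l').
exact: (kconn_trans (@deg1 R) deg1_X (conn2_X l deg1_l) X_conn2_l').
Qed.
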